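(* Under the standing assumptions (A1)–(A4), let $\alpha>0$, $0<\gamma<\frac1{m-1}$, and consider the system (Algorithm B) $$\begin{aligned} \dot x&=\mathrm{Prox}_{F^m}\Big[x-\nabla F^0(x)+v+\gamma\textstyle\sum_{j=1}^{m-1}z^j\Big]-x,\\ \dot z^j&=\mathrm{Prox}_{F^j}[x-\gamma z^j]-x,\quad j=1,\dots,m-1,\\ \dot v&=-Y^{-1}(x-d)-\alpha L_{nq}v-w,\\ \dot w&=\alpha L_{nq}v,\\ \dot y&=-L_{nn}y, \end{aligned}$$ with state $(x,z,v,w,y)\in\mathbb{R}^{nq}\times\mathbb{R}^{(m-1)nq}\times\mathbb{R}^{nq}\times\mathbb{R}^{nq}\times\mathbb{R}^{n^2}$. If $(x^*,z^*,v^*,w^*,y^* )$ is an equilibrium of this system with $(\mathbf{1}_n\otimes I_q)^TH_{nq}w^*=\mathbf{0}_q$ and $y^*=\mathbf{1}_n\otimes h$, then $x^*$ is a solution of the problem $\min_x\sum_if_i(x_i)$ s.t. $\sum_ix_i=\sum_id_i$.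
   Context: Standing setup: $n$ agents; agent $i$ has state $x_i\in\mathbb{R}^q$, $x=(x_1^T,\dots,x_n^T)^T$. Given $d_i\in\mathbb{R}^q$, $d=(d_1^T,\dots,d_n^T)^T$. Integer $m\ge2$. $f_i=\sum_{j=0}^mf_i^j$; $F^j(x)=\sum_if_i^j(x_i)$; $\nabla F^0(x)=(\nabla f_1^0(x_1)^T,\dots,\nabla f_n^0(x_n)^T)^T$. Assumptions: (A1) each $f_i^0$ is twice continuously differentiable and strongly convex with a common constant $c>m-1$; (A2) each $f_i^j$, $j=1,\dots,m$, is proper closed convex; (A3) weighted directed strongly connected graph; (A4) feasibility. $\mathrm{prox}_f[\theta]=\arg\min_\delta\{f(\delta)+\frac12\|\delta-\theta\|^2\}$, $\mathrm{Prox}_{F^j}[\xi]=(\mathrm{prox}_{f_1^j}[\xi_1]^T,\dots,\mathrm{prox}_{f_n^j}[\xi_n]^T)^T$. Graph: adjacency $\mathcal{A}=[a_{ij}]$, Laplacian $L_n=D^{in}-\mathcal{A}$, $D^{in}=\mathrm{diag}(\sum_ja_{ij})$; $h$ positive left eigenvector with $h^TL_n=0$, $\sum_ih_i=1$; $H_{nq}=\mathrm{diag}(h_1,\dots,h_n)\otimes I_q$, $L_{nq}=L_n\otimes I_q$, $L_{nn}=L_n\otimes I_n$. The vector $y=(y_1^T,\dots,y_n^T)^T$ with $y_i=(y_i^1,\dots,y_i^n)^T\in\mathbb{R}^n$, and $Y=\mathrm{diag}(y_1^1,y_2^2,\dots,y_n^n)\otimes I_q$ (assumed invertible where used). *)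

From mathcomp Require Import ssreflect ssrfun ssrbool eqtype ssrnat seq fintype bigop.
From Stdlib Require Import Reals Relations.
Set Implicit Arguments. Unset Strict Implicit.

Local Open Scope R_scope.

Definition rsum (n : nat) (F : 'I_n -> R) : R := \big[Rplus/0%R]_(i < n) F i.

Definition rsum_nat (lo hi : nat) (F : nat -> R) : R :=
  \big[Rplus/0%R]_(lo <= j < hi) F j.

Definition vec (q : nat) := 'I_q -> R.

Definition dot (q : nat) (u v : vec q) : R := rsum (fun k => u k * v k).
Definition norm (q : nat) (u : vec q) : R := sqrt (dot u u).
Definition vsub (q : nat) (u v : vec q) : vec q := fun k => u k - v k.
Definition vcomb (q : nat) (t : R) (u v : vec q) : vec q :=
  fun k => t * u k + (1 - t) * v k.

(* Extended-valued functions R^q -> R ∪ {+oo} are represented by a pair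
   (f, dom): f x is the value on dom, and the value is +oo off dom. *)
Definition proper_fun (q : nat) (dom : vec q -> Prop) : Prop := exists x, dom x.

Definition convex_fun (q : nat) (f : vec q -> R) (dom : vec q -> Prop) : Prop :=
  forall x y t, dom x -> dom y -> 0 <= t <= 1 ->
    dom (vcomb t x y) /\ f (vcomb t x y) <= t * f x + (1 - t) * f y.

Definition closed_fun (q : nat) (f : vec q -> R) (dom : vec q -> Prop) : Prop :=
  forall x r, (dom x -> r < f x) ->
    exists del, 0 < del /\
      forall y, norm (vsub y x) < del -> dom y -> r < f y.

Definition strongly_convex (q : nat) (c : R) (f : vec q -> R) : Prop :=
  forall x y t, 0 <= t <= 1 ->
    f (vcomb t x y) <= t * f x + (1 - t) * f y
                       - c / 2 * t * (1 - t) * (norm (vsub x y)) ^ 2.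

Definition is_gradient (q : nat) (f : vec q -> R) (g : vec q -> vec q) : Prop :=
  forall x eps, 0 < eps -> exists del, 0 < del /\
    forall y, norm (vsub y x) < del ->
      Rabs (f y - f x - dot (g x) (vsub y x)) <= eps * norm (vsub y x).

Definition continuous_vec (q : nat) (f : vec q -> R) : Prop :=
  forall x eps, 0 < eps -> exists del, 0 < del /\
    forall y, norm (vsub y x) < del -> Rabs (f y - f x) < eps.

Definition C2_with_gradient (q : nat) (f : vec q -> R) (g : vec q -> vec q) : Prop :=
  is_gradient f g /\
  exists Hs : vec q -> 'I_q -> vec q,
    (forall k, is_gradient (fun x => g x k) (fun x => Hs x k)) /\
    (forall k l, continuous_vec (fun x => Hs x k l)).

Definition is_prox (q : nat) (f : vec q -> R) (dom : vec q -> Prop)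
  (theta p : vec q) : Prop :=
  dom p /\ forall del, dom del ->
    f p + / 2 * (norm (vsub p theta)) ^ 2 <= f del + / 2 * (norm (vsub del theta)) ^ 2.

Definition laplacian (n : nat) (a : 'I_n -> 'I_n -> R) (i j : 'I_n) : R :=
  (if i == j then rsum (fun l => a i l) else 0) - a i j.

(* strongly connected: a_ij > 0 means an edge from j to i *)
Definition strongly_connected (n : nat) (a : 'I_n -> 'I_n -> R) : Prop :=
  forall i j : 'I_n, clos_refl_trans 'I_n (fun u v => 0 < a v u) i j.

From HB Require Import structures.
From mathcomp Require Import ssreflect ssrfun ssrbool eqtype ssrnat seq fintype bigop.
From mathcomp Require Import zify.
From Stdlib Require Import Reals Relations Lra.
Set Implicit Arguments. Unset Strict Implicit.
Local Open Scope R_scope.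

(** At an equilibrium, [w = alpha L v = 0] forces [L v = 0], so by strong
    connectivity every coordinate of [v] is a consensus value; the [v]-equation
    then gives [w_i = -(x_i - d_i)/h_i], and [sum_i h_i w_i = 0] is exactly the
    resource constraint [sum_i x_i = sum_i d_i].  Each equilibrium relation
    [x = prox_f[theta]] is the subgradient condition [theta - x \in \partial f(x)].
    Summing the subgradient inequalities of [f_i^0] and of the [f_i^j] at agent
    [i], the [gamma z^j] terms cancel and what is left is
    [f_i(x*_i) + <v_i, x_i - x*_i> <= f_i(x_i)] for every feasible [x]; the
    consensus [v] is orthogonal to the feasible directions, so summing over the
    agents gives optimality. *)

HB.instance Definition _ :=
  Monoid.isComLaw.Build R 0 Rplus (fun a b c => esym (Rplus_assoc a b c))
    Rplus_comm Rplus_0_l.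
HB.instance Definition _ := Monoid.isMulLaw.Build R 0 Rmult Rmult_0_l Rmult_0_r.
HB.instance Definition _ :=
  Monoid.isAddLaw.Build R Rmult Rplus Rmult_plus_distr_r Rmult_plus_distr_l.

Lemma eq_rsum n (F G : 'I_n -> R) : (forall i, F i = G i) -> rsum F = rsum G.
Proof. by move=> FG; apply: eq_bigr => i _. Qed.

Lemma rsumD n (F G : 'I_n -> R) : rsum (fun i => F i + G i) = rsum F + rsum G.
Proof. exact: big_split. Qed.

Lemma rsumZ n c (F : 'I_n -> R) : rsum (fun i => c * F i) = c * rsum F.
Proof. by rewrite /rsum big_distrr. Qed.

Lemma rsumB n (F G : 'I_n -> R) : rsum (fun i => F i - G i) = rsum F - rsum G.
Proof.
rewrite (eq_rsum (G := fun i => F i + -1 * G i)) ?rsumD ?rsumZ => [|i]; ring.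
Qed.

Lemma ler_rsum n (F G : 'I_n -> R) : (forall i, F i <= G i) -> rsum F <= rsum G.
Proof.
by move=> FG; apply: (big_ind2 (fun x y => x <= y)) => //; move=> *; lra.
Qed.

Lemma rsum_ge0 n (F : 'I_n -> R) : (forall i, 0 <= F i) -> 0 <= rsum F.
Proof. by move=> F0; apply: (big_ind (fun x => 0 <= x)) => //; move=> *; lra. Qed.

Lemma rsum_ge_term n (F : 'I_n -> R) i : (forall i, 0 <= F i) -> F i <= rsum F.
Proof.
move=> F0; rewrite /rsum (bigD1 i) //= -[X in X <= _]Rplus_0_r.
by apply: Rplus_le_compat_l; apply: (big_ind (fun x => 0 <= x)) => //; move=> *; lra.
Qed.

Lemma rsum_delta n i A (u : 'I_n -> R) :
  rsum (fun l => (if i == l then A else 0) * u l) = A * u i.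
Proof.
rewrite /rsum (bigD1 i) //= eqxx big1 ?Rplus_0_r // => j.
by rewrite eq_sym => /negbTE ->; lra.
Qed.

Lemma exchange_rsum n p (F : 'I_n -> 'I_p -> R) :
  rsum (fun i => rsum (F i)) = rsum (fun k => rsum (fun i => F i k)).
Proof. exact: exchange_big. Qed.

Lemma exchange_rsum_nat n lo hi (F : 'I_n -> nat -> R) :
  rsum (fun i => rsum_nat lo hi (F i)) = rsum_nat lo hi (fun j => rsum (fun i => F i j)).
Proof. exact: exchange_big. Qed.

Lemma eq_rsum_nat lo hi (F G : nat -> R) :
  (forall j, (lo <= j < hi)%nat -> F j = G j) -> rsum_nat lo hi F = rsum_nat lo hi G.
Proof. by move=> FG; apply: eq_big_nat. Qed.

Lemma ler_rsum_nat lo hi (F G : nat -> R) :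
  (forall j, (lo <= j < hi)%nat -> F j <= G j) -> rsum_nat lo hi F <= rsum_nat lo hi G.
Proof.
move=> FG; rewrite /rsum_nat big_seq [X in _ <= X]big_seq.
apply: (big_ind2 (fun x y => x <= y)) => [|*|j]; first lra; first lra.
by rewrite mem_index_iota; apply: FG.
Qed.

Lemma rsum_natD lo hi (F G : nat -> R) :
  rsum_nat lo hi (fun j => F j + G j) = rsum_nat lo hi F + rsum_nat lo hi G.
Proof. exact: big_split. Qed.

Lemma rsum_natZ lo hi c (F : nat -> R) :
  rsum_nat lo hi (fun j => c * F j) = c * rsum_nat lo hi F.
Proof. by rewrite /rsum_nat big_distrr. Qed.

Lemma rsum_nat_recr lo hi F :
  (lo <= hi)%nat -> rsum_nat lo hi.+1 F = rsum_nat lo hi F + F hi.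
Proof. by move=> ?; rewrite /rsum_nat big_nat_recr. Qed.

Lemma rsum_mul_const_eq0 n (u y : 'I_n -> R) :
  (forall i l, u i = u l) -> rsum y = 0 -> rsum (fun i => u i * y i) = 0.
Proof.
case: n u y => [|n] u y u_const y0; first by rewrite /rsum big_ord0.
rewrite (eq_rsum (G := fun i => u ord0 * y i)) ?rsumZ ?y0 ?Rmult_0_r // => i.
by rewrite (u_const i ord0).
Qed.

Section Convexity.

Variable q : nat.

Definition convex_real (f : vec q -> R) : Prop :=
  forall x y t, 0 <= t <= 1 -> f (vcomb t x y) <= t * f x + (1 - t) * f y.

Lemma strongly_convex_convex c (f : vec q -> R) :
  0 <= c -> strongly_convex c f -> convex_real f.
Proof.
move=> c0 fc x y t t01; have := fc x y t t01.
have : 0 <= c / 2 * t * (1 - t) * norm (vsub x y) ^ 2.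
  by apply: Rmult_le_pos; [apply: Rmult_le_pos; [apply: Rmult_le_pos|]|apply: pow2_ge_0]; lra.
lra.
Qed.

Lemma norm_sq (u : vec q) : norm u ^ 2 = dot u u.
Proof. by rewrite pow2_sqrt //; apply: rsum_ge0 => k; nra. Qed.

Lemma le0_of_le_small_multiple a K :
  0 <= K -> (forall t, 0 < t <= 1 -> a <= t * K) -> a <= 0.
Proof.
move=> K0 aK; apply: Rnot_lt_le => a0.
set t := Rmin 1 (a / (K + 1)).
have t0 : 0 < t by apply: Rmin_pos; [lra|apply: Rdiv_lt_0_compat; lra].
have tK : t * (K + 1) <= a.
  apply: (Rle_trans _ (a / (K + 1) * (K + 1))); last by right; field; lra.
  by apply: Rmult_le_compat_r; [lra|apply: Rmin_r].
have := aK t (conj t0 (Rmin_l _ _)); nra.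
Qed.

Lemma prox_variational_ineq (f : vec q -> R) dom theta p del :
  convex_fun f dom -> is_prox f dom theta p -> dom del ->
  f p + dot (vsub theta p) (vsub del p) <= f del.
Proof.
move=> f_cvx [dom_p p_min] dom_del.
set E := dot (vsub del p) (vsub del p).
set W := dot (vsub theta p) (vsub del p).
have E0 : 0 <= E by apply: rsum_ge0 => k; nra.
suff : f p + W - f del <= 0 by lra.
apply: (le0_of_le_small_multiple (K := E / 2)); first lra.
move=> t [t0 t1].
have [dom_t f_t] := f_cvx del p t dom_del dom_p (conj (Rlt_le _ _ t0) t1).
have := p_min _ dom_t; rewrite !norm_sq.
have -> : dot (vsub (vcomb t del p) theta) (vsub (vcomb t del p) theta)
          = t ^ 2 * E + -2 * t * W + dot (vsub p theta) (vsub p theta).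
  rewrite /E /W /dot -!rsumZ -!rsumD; apply: eq_rsum => k.
  by rewrite /vsub /vcomb; ring.
move=> p_le_t; apply: (Rmult_le_reg_l t) => //; nra.
Qed.

Lemma convex_gradient_ineq (f : vec q -> R) g p del :
  is_gradient f g -> convex_real f -> f p + dot (g p) (vsub del p) <= f del.
Proof.
move=> f_grad f_cvx.
set N := norm (vsub del p); set G := dot (g p) (vsub del p).
have N0 : 0 <= N by apply: sqrt_pos.
suff : G - (f del - f p) <= 0 by lra.
apply: (le0_of_le_small_multiple N0) => eps [eps0 _].
have [dl [dl0 near_p]] := f_grad p eps eps0.
set t := Rmin 1 (dl / (2 * (N + 1))).
have t0 : 0 < t by apply: Rmin_pos; [lra|apply: Rdiv_lt_0_compat; lra].
have t1 : t <= 1 by apply: Rmin_l.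
have norm_t : norm (vsub (vcomb t del p) p) = t * N.
  rewrite /N /norm.
  have -> : dot (vsub (vcomb t del p) p) (vsub (vcomb t del p) p)
            = t ^ 2 * dot (vsub del p) (vsub del p).
    by rewrite /dot -rsumZ; apply: eq_rsum => k; rewrite /vsub /vcomb; ring.
  rewrite sqrt_mult; [|nra|by apply: rsum_ge0 => k; nra].
  by rewrite sqrt_pow2 //; lra.
have tN : t * N < dl.
  have : t * (2 * (N + 1)) <= dl.
    apply: (Rle_trans _ (dl / (2 * (N + 1)) * (2 * (N + 1)))); last by right; field; lra.
    by apply: Rmult_le_compat_r; [lra|apply: Rmin_r].
  nra.
have := near_p (vcomb t del p); rewrite norm_t => /(_ tN).
have -> : dot (g p) (vsub (vcomb t del p) p) = t * G.
  by rewrite /dot /G -rsumZ; apply: eq_rsum => k; rewrite /vsub /vcomb; ring.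
move=> abs_le; have lin_lb := Rle_trans _ _ _ (Rle_abs _) (Rle_trans _ _ _ (Req_le _ _ (Rabs_Ropp _)) abs_le).
have := f_cvx del p t (conj (Rlt_le _ _ t0) t1).
move=> f_t; apply: (Rmult_le_reg_l t) => //; nra.
Qed.

End Convexity.

Section Consensus.

Variables (n : nat) (a : 'I_n -> 'I_n -> R).

Lemma laplacian_mulE (u : 'I_n -> R) i :
  rsum (fun l => laplacian a i l * u l) = rsum (fun l => a i l * (u i - u l)).
Proof.
have -> : rsum (fun l => laplacian a i l * u l) =
  rsum (fun l => (if i == l then rsum (fun l => a i l) else 0) * u l + -1 * (a i l * u l)).
  by apply: eq_rsum => l; rewrite /laplacian; ring.
have -> : rsum (fun l => a i l * (u i - u l)) = rsum (fun l => u i * a i l + -1 * (a i l * u l)).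
  by apply: eq_rsum => l; ring.
by rewrite !rsumD !rsumZ rsum_delta Rmult_comm.
Qed.

Lemma exists_argmax (u : 'I_n -> R) (i : 'I_n) : exists i0, forall l, u l <= u i0.
Proof.
suff [i0 i0_max] : exists i0, forall l, l \in enum 'I_n -> u l <= u i0.
  by exists i0 => l; apply: i0_max; rewrite mem_enum.
elim: (enum 'I_n) => [|x s [j j_max]]; first by exists i.
case: (Rle_dec (u x) (u j)) => [xj|/Rnot_le_lt jx].
- by exists j => l; rewrite in_cons => /orP [/eqP ->|/j_max].
- by exists x => l; rewrite in_cons => /orP [/eqP ->|/j_max]; lra.
Qed.

Hypotheses (a_ge0 : forall i l, 0 <= a i l) (a_conn : strongly_connected a).

(* Discrete maximum principle: the maximum of [u] propagates along edges. *)
Lemma laplacian_kernel_const (u : 'I_n -> R) :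
  (forall i, rsum (fun l => laplacian a i l * u l) = 0) -> forall i l, u i = u l.
Proof.
move=> Lu0 i.
have [i0 i0_max] := exists_argmax u i.
have max_step x y : 0 < a y x -> u y = u i0 -> u x = u i0.
  move=> ayx uy; have := Lu0 y; rewrite laplacian_mulE => sum0.
  have terms_ge0 l : 0 <= a y l * (u y - u l).
    by apply: Rmult_le_pos => //; have := i0_max l; lra.
  have := rsum_ge_term x terms_ge0; rewrite sum0 => term_le0.
  have := i0_max x; case: (Rle_dec (u y - u x) 0) => [|/Rnot_le_lt]; first lra.
  by move=> pos; have := Rmult_lt_0_compat _ _ ayx pos; lra.
have max_path x y : clos_refl_trans _ (fun u v => 0 < a v u) x y -> u y = u i0 -> u x = u i0.
  elim=> [x' y' /max_step //|//|x' y' z' _ IHxy _ IHyz uz]; exact: IHxy (IHyz uz).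
by move=> l; rewrite (max_path i i0 (a_conn i i0) erefl) (max_path l i0 (a_conn l i0) erefl).
Qed.

End Consensus.

Lemma weighted_balance n (h x d w : 'I_n -> R) :
  (forall i, 0 < h i) -> (forall i, - (x i - d i) / h i - w i = 0) ->
  rsum (fun i => h i * w i) = 0 -> rsum x = rsum d.
Proof.
move=> h_pos v_eq hw0.
have : rsum (fun i => h i * w i) = rsum (fun i => -1 * x i + d i).
  apply: eq_rsum => i; have := v_eq i; have := h_pos i => hi wi.
  have -> : w i = - (x i - d i) / h i by lra.
  by field; lra.
by rewrite rsumD rsumZ; lra.
Qed.

Lemma agent_variational_ineq q m (f0 : vec q -> R) (g0 : vec q -> vec q)
    (f : nat -> vec q -> R) (dom : nat -> vec q -> Prop) (gamma : R)
    (xs v : vec q) (z : nat -> vec q) (x : vec q) :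
  (1 <= m)%nat -> is_gradient f0 g0 -> convex_real f0 ->
  (forall j, (1 <= j <= m)%nat -> convex_fun (f j) (dom j)) ->
  is_prox (f m) (dom m)
    (fun k => xs k - g0 xs k + v k + gamma * rsum_nat 1 m (fun j => z j k)) xs ->
  (forall j, (1 <= j <= m - 1)%nat ->
     is_prox (f j) (dom j) (fun k => xs k - gamma * z j k) xs) ->
  (forall j, (1 <= j <= m)%nat -> dom j x) ->
  f0 xs + rsum_nat 1 m.+1 (fun j => f j xs) + dot v (vsub x xs)
  <= f0 x + rsum_nat 1 m.+1 (fun j => f j x).
Proof.
move=> m1 g0_grad f0_cvx f_cvx prox_m prox_j x_dom.
have ineq0 := convex_gradient_ineq xs x g0_grad f0_cvx.
have m_range : (1 <= m <= m)%nat by lia.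
have ineq_m := prox_variational_ineq (f_cvx m m_range) prox_m (x_dom m m_range).
have ineq_j : rsum_nat 1 m (fun j => f j xs + dot (fun k => - gamma * z j k) (vsub x xs))
              <= rsum_nat 1 m (fun j => f j x).
  apply: ler_rsum_nat => j j_range.
  have j_le : (1 <= j <= m)%nat by lia.
  have := prox_variational_ineq (f_cvx j j_le) (prox_j j ltac:(lia)) (x_dom j j_le).
  by rewrite /dot /vsub (eq_rsum (G := fun k => - gamma * z j k * (x k - xs k))) //; move=> k; ring.
rewrite rsum_natD in ineq_j.
have cancel : dot (g0 xs) (vsub x xs)
  + dot (vsub (fun k => xs k - g0 xs k + v k + gamma * rsum_nat 1 m (fun j => z j k)) xs) (vsub x xs)
  + rsum_nat 1 m (fun j => dot (fun k => - gamma * z j k) (vsub x xs)) = dot v (vsub x xs).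
  rewrite /dot -exchange_rsum_nat -!rsumD; apply: eq_rsum => k.
  rewrite (eq_rsum_nat (G := fun j => - gamma * (x k - xs k) * z j k)) ?rsum_natZ /vsub;
    first ring.
  by move=> j _ /=; ring.
rewrite !rsum_nat_recr //; lra.
Qed.

Theorem lemma5
  (n q m : nat) (Hm : (2 <= m)%nat)
  (f0 : 'I_n -> vec q -> R) (g0 : 'I_n -> vec q -> vec q)
  (fj : nat -> 'I_n -> vec q -> R) (domj : nat -> 'I_n -> vec q -> Prop)
  (c : R) (d : 'I_n -> vec q)
  (a : 'I_n -> 'I_n -> R) (h : 'I_n -> R)
  (alpha gamma : R)
  (xs : 'I_n -> vec q) (zs : nat -> 'I_n -> vec q)
  (vs ws : 'I_n -> vec q) (ys : 'I_n -> 'I_n -> R)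
  (HA1c : INR m - 1 < c)
  (HA1 : forall i, C2_with_gradient (f0 i) (g0 i) /\ strongly_convex c (f0 i))
  (HA2 : forall j i, (1 <= j <= m)%nat ->
     proper_fun (domj j i) /\ closed_fun (fj j i) (domj j i)
     /\ convex_fun (fj j i) (domj j i))
  (Ha_nonneg : forall i k, 0 <= a i k)
  (HA3 : strongly_connected a)
  (HA4 : exists x : 'I_n -> vec q,
     (forall k, rsum (fun i => x i k) = rsum (fun i => d i k)) /\
     (forall j i, (1 <= j <= m)%nat -> domj j i (x i)))
  (Hh_pos : forall i, 0 < h i)
  (Hh_left : forall k, rsum (fun i => h i * laplacian a i k) = 0)
  (Hh_sum : rsum h = 1)
  (Halpha : 0 < alpha)
  (Hgamma : 0 < gamma < / (INR m - 1))
  (Heq_x : forall i,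
     is_prox (fj m i) (domj m i)
       (fun k => xs i k - g0 i (xs i) k + vs i k
                 + gamma * rsum_nat 1 m (fun j => zs j i k))
       (xs i))
  (Heq_z : forall j i, (1 <= j <= m - 1)%nat ->
     is_prox (fj j i) (domj j i) (fun k => xs i k - gamma * zs j i k) (xs i))
  (Heq_v : forall i k,
     - (xs i k - d i k) / ys i i
     - alpha * rsum (fun l => laplacian a i l * vs l k) - ws i k = 0)
  (Heq_w : forall i k, alpha * rsum (fun l => laplacian a i l * vs l k) = 0)
  (Heq_y : forall i k, - rsum (fun l => laplacian a i l * ys l k) = 0)
  (Hw : forall k, rsum (fun i => h i * ws i k) = 0)
  (Hy : forall i k, ys i k = h k) :
  (forall k, rsum (fun i => xs i k) = rsum (fun i => d i k)) /\
  (forall j i, (1 <= j <= m)%nat -> domj j i (xs i)) /\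
  (forall x : 'I_n -> vec q,
     (forall k, rsum (fun i => x i k) = rsum (fun i => d i k)) ->
     (forall j i, (1 <= j <= m)%nat -> domj j i (x i)) ->
     rsum (fun i => f0 i (xs i) + rsum_nat 1 m.+1 (fun j => fj j i (xs i)))
     <= rsum (fun i => f0 i (x i) + rsum_nat 1 m.+1 (fun j => fj j i (x i)))).
Proof.
have c0 : 0 <= c by have := le_INR 2 m ltac:(lia); simpl in *; lra.
have Lv0 i k : rsum (fun l => laplacian a i l * vs l k) = 0.
  by have /Rmult_integral [|//] := Heq_w i k; lra.
have v_const k := laplacian_kernel_const Ha_nonneg HA3 (fun i => Lv0 i k).
have balance k : rsum (fun i => xs i k) = rsum (fun i => d i k).
  apply: (weighted_balance Hh_pos _ (Hw k)) => i.
  by have := Heq_v i k; rewrite Lv0 Hy Rmult_0_r Rminus_0_r.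
have feasible j i : (1 <= j <= m)%nat -> domj j i (xs i).
  move=> j_range; have [->|j_lt] : j = m \/ (1 <= j <= m - 1)%nat by lia.
  - exact: (Heq_x i).1.
  - exact: (Heq_z j i j_lt).1.
split=> //; split=> // x x_bal x_dom.
have m1 : (1 <= m)%nat by lia.
have agent i := agent_variational_ineq (x := x i) m1 (HA1 i).1.1
  (strongly_convex_convex c0 (HA1 i).2) (fun j j_range => (HA2 j i j_range).2.2)
  (Heq_x i) (fun j => Heq_z j i) (fun j => x_dom j i).
have v_orth : rsum (fun i => dot (vs i) (vsub (x i) (xs i))) = 0.
  rewrite /dot exchange_rsum; apply: big1 => k _.
  apply: rsum_mul_const_eq0 => //.
  by rewrite /vsub rsumB x_bal balance Rminus_diag.
by have := ler_rsum agent; rewrite rsumD v_orth; lra.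
Qed.
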